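(* Let $\Gamma=G_4$ be the graph with two vertices $V_\alpha,V_\beta$, one loop at $V_\alpha$, one loop at $V_\beta$, and exactly one edge joining $V_\alpha$ and $V_\beta$, with degrees $d_\alpha,d_\beta\in\mathbb{Z}$. The family $\mathcal{F}(G_4,(d_\alpha,d_\beta))$ is jumping if and only if one of the following holds: (i) $d_\alpha<0$ and $d_\beta=1$; (ii) $d_\alpha=0$ and $d_\beta\ge 0$; (iii) $d_\alpha=1$ and $d_\beta<0$; (iv) $d_\alpha\ge 0$ and $d_\beta=0$; (v) $d_\alpha=d_\beta=1$.
   Context: Let $\Gamma$ be a connected graph (loops and multiple edges allowed) with vertices $V_1,\dots,V_n$ and integers $d_1,\dots,d_n$. A nodal curve with dual graph $\Gamma$ and rational components is a curve $C$ obtained from the disjoint union of copies $\mathbb{P}^1_{V_i}$ of $\mathbb{P}^1$ by choosing, for each edge of $\Gamma$, a point on each of its endpoint copies (all chosen points distinct) and identifying these two points to a node. A line bundle on $C$ is equivalent to line bundles on each $\mathbb{P}^1_{V_i}$ together with, at each node, an identification of the two fibres (descent data, a scalar in $\mathbb{C}^*$ after trivialising); global sections are tuples of sections on the $\mathbb{P}^1$'s compatible with these identifications. The family $\mathcal{F}(\Gamma,(d_i))$ consists of all pairs $(C,L)$ with $C$ such a curve (any choice of node positions) and $L$ a line bundle on $C$ whose pullback to $\mathbb{P}^1_{V_i}$ has degree $d_i$ for all $i$ (any descent data). $\Gamma$ with degrees $(d_i)$ is called jumping if $h^0(C,L)$ is not constant on $\mathcal{F}(\Gamma,(d_i))$,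 and non-jumping otherwise. *)

From HB Require Import structures.
From mathcomp Require Import all_boot all_order all_algebra.
From mathcomp Require Import complex.
From mathcomp Require Import Rstruct.
Unset Printing Implicit Defensive.
Import Order.TTheory GRing.Theory Num.Theory.
Local Open Scope ring_scope.

Definition C : fieldType := complex Rdefinitions.R.

(* Dimension of H^0(P^1, O(d)): 0 if d < 0, d + 1 otherwise. *)
Definition nsec (d : int) : nat := if d < 0 then 0%N else (absz d).+1.

(* A global section of O(d) on P^1 is a homogeneous polynomial of degree d in
   the homogeneous coordinates (X,Y), given by its coefficient vector c
   (c_i is the coefficient of X^i Y^(d-i)).  [ev d c p] is its value at the
   representative p = (x, y) in C^2 \ {0} of a point of P^1 (this amounts to
   a trivialisation of the fibre of O(d) at that point). *)
Definition ev (d : int) (c : 'rV[C]_(nsec d)) (p : C * C) : C :=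
  \sum_(i < nsec d) c 0 i * p.1 ^+ i * p.2 ^+ (absz d - i).

Definition distinct_pts (p q : C * C) : Prop := p.1 * q.2 - q.1 * p.2 != 0.

(* Data of a member (C, L) of the family F(G_4, (da, db)):
   on P^1_alpha: the two points a1, a2 glued to form the loop at V_alpha,
                 and the point a3 glued to b3 (the edge alpha--beta);
   on P^1_beta : the two points b1, b2 glued to form the loop at V_beta,
                 and the point b3;
   descent data (gluing scalars) la at the alpha-loop node, lb at the
   beta-loop node, le at the edge node. *)
Record G4_data := mkG4 {
  a1 : C * C; a2 : C * C; a3 : C * C;
  b1 : C * C; b2 : C * C; b3 : C * C;
  la : C; lb : C; le : C }.

(* Validity: points on each component pairwise distinct (hence also nonzero
   representatives), and nonzero gluing scalars. *)
Definition G4_valid (D : G4_data) : Prop :=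
  [/\ [/\ distinct_pts (a1 D) (a2 D), distinct_pts (a1 D) (a3 D)
        & distinct_pts (a2 D) (a3 D)],
      [/\ distinct_pts (b1 D) (b2 D), distinct_pts (b1 D) (b3 D)
        & distinct_pts (b2 D) (b3 D)]
    & [/\ la D != 0, lb D != 0 & le D != 0]].

(* The compatibility conditions on a pair (s, t) of sections (s on P^1_alpha
   of degree da, t on P^1_beta of degree db), packed as one row vector
   v = (s | t); the three entries vanish iff the pair glues to a global
   section of L on the nodal curve. *)
Definition G4_conds (da db : int) (D : G4_data)
    (v : 'rV[C]_(nsec da + nsec db)) : 'rV[C]_3 :=
  let s := lsubmx v in let t := rsubmx v in
  \row_(k < 3)
    (if k == 0 :> nat then ev da s (a1 D) - la D * ev da s (a2 D)
     else if k == 1 :> nat then ev db t (b1 D) - lb D * ev db t (b2 D)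
     else ev da s (a3 D) - le D * ev db t (b3 D)).

Definition G4_h0 (da db : int) (D : G4_data) : nat :=
  \rank (kermx (lin1_mx (G4_conds da db D))).

Definition G4_jumping (da db : int) : Prop :=
  exists D1 D2 : G4_data, [/\ G4_valid D1, G4_valid D2 &
    G4_h0 da db D1 <> G4_h0 da db D2].

(* h^0(C, L) is the dimension of the kernel of the gluing map
   (s, t) |-> (s(a1) - la s(a2), t(b1) - lb t(b2), s(a3) - le t(b3)) into C^3,
   so the family jumps exactly when the rank of this map varies.  A section of
   O(d) on P^1 vanishes when d < 0, is constant when d = 0, is determined by its
   values at two points when d = 1, and takes arbitrary values at three points
   when d >= 2 (products of linear forms interpolate).  From this the rank is
   computed for every member in the non-jumping cases; in the jumping cases two
   members with marked points 0, 1, oo and suitable gluing scalars have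
   different ranks.  Exchanging the two components and inverting the edge
   scalar preserves the rank, so only the cases da <= db need to be treated. *)

From HB Require Import structures.
From mathcomp Require Import all_boot all_order all_algebra.
From mathcomp Require Import complex Rstruct zify ring.
Import Order.TTheory GRing.Theory Num.Theory.
Local Open Scope ring_scope.

Lemma natC_neq0 n : (n.+1%:R : C) != 0.
Proof. by rewrite /C pnatr_eq0. Qed.

(* As a function of p, [cross p q] is a section of O(1) vanishing exactly at q. *)
Definition cross (p q : C * C) : C := p.1 * q.2 - q.1 * p.2.

Lemma crossxx p : cross p p = 0.
Proof. by rewrite /cross mulrC subrr. Qed.

Lemma crossC p q : cross q p = - cross p q.
Proof. rewrite /cross; ring. Qed.

Lemma distinct_pts_sym {p q} : distinct_pts p q -> distinct_pts q p.
Proof. by rewrite /distinct_pts -/(cross q p) crossC oppr_eq0. Qed.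

Lemma evD d (c c' : 'rV[C]_(nsec d)) p : ev d (c + c') p = ev d c p + ev d c' p.
Proof. by rewrite /ev -big_split; apply: eq_bigr => i _; rewrite !mxE !mulrDl. Qed.

Lemma evZ d a (c : 'rV[C]_(nsec d)) p : ev d (a *: c) p = a * ev d c p.
Proof. by rewrite /ev mulr_sumr; apply: eq_bigr => i _; rewrite mxE !mulrA. Qed.

Lemma ev0 d p : ev d 0 p = 0.
Proof. by rewrite /ev big1 // => i _; rewrite mxE !mul0r. Qed.

Lemma ev_Negz n (c : 'rV[C]_(nsec (Negz n))) p : ev (Negz n) c p = 0.
Proof. by rewrite /ev big_ord0. Qed.

Lemma ev_deg0 (c : 'rV[C]_(nsec (Posz 0))) p q : ev (Posz 0) c p = ev (Posz 0) c q.
Proof. by rewrite /ev !big_ord1 !expr0. Qed.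

Lemma ev_deg1D (c : 'rV[C]_(nsec (Posz 1))) p q :
  ev (Posz 1) c (p.1 + q.1, p.2 + q.2) = ev (Posz 1) c p + ev (Posz 1) c q.
Proof. rewrite /ev !big_ord_recl !big_ord0 /=; ring. Qed.

Definition is_section (d : int) (f : C * C -> C) : Prop :=
  exists c : 'rV[C]_(nsec d), forall p, ev d c p = f p.

Lemma eq_is_section d f g : is_section d f -> f =1 g -> is_section d g.
Proof. by move=> [c Hc] fg; exists c => p; rewrite Hc fg. Qed.

Lemma is_section1 : is_section (Posz 0) (fun=> 1).
Proof. by exists (\row_i 1) => p; rewrite /ev big_ord1 mxE !expr0 !mulr1. Qed.

Definition hom_eval (n : nat) (P : {poly C}) (p : C * C) : C :=
  \sum_(i < n.+1) P`_i * p.1 ^+ i * p.2 ^+ (n - i).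

Lemma is_section_hom_eval n (P : {poly C}) : is_section (Posz n) (hom_eval n P).
Proof. by exists (\row_i P`_i) => p; apply: eq_bigr => i _; rewrite mxE. Qed.

Lemma hom_eval_mulX n (P : {poly C}) p :
  hom_eval n.+1 ('X * P) p = p.1 * hom_eval n P p.
Proof.
rewrite /hom_eval big_ord_recl coefXM /= !mul0r add0r mulr_sumr.
by apply: eq_bigr => i _; rewrite coefXM /= subSS exprS; ring.
Qed.

Lemma hom_eval_lift n (P : {poly C}) p : (size P <= n.+1)%N ->
  hom_eval n.+1 P p = p.2 * hom_eval n P p.
Proof.
move=> sP; rewrite /hom_eval big_ord_recr /= [P`_n.+1]nth_default //.
rewrite !mul0r addr0 mulr_sumr.
apply: eq_bigr => i _; rewrite subSn ?exprS; [ring | by rewrite -ltnS].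
Qed.

Lemma hom_evalB n a b (P Q : {poly C}) p :
  hom_eval n (a *: P - b *: Q) p = a * hom_eval n P p - b * hom_eval n Q p.
Proof.
rewrite /hom_eval !mulr_sumr -sumrB; apply: eq_bigr => i _.
by rewrite coefB !coefZ; ring.
Qed.

Lemma is_section_cross q {n f} :
  is_section (Posz n) f -> is_section (Posz n.+1) (fun p => cross p q * f p).
Proof.
case=> c Hc; pose P := \poly_(i < n.+1) c 0 (inord i).
have evP p : hom_eval n P p = f p.
  by rewrite -Hc; apply: eq_bigr => i _; rewrite coef_poly ltn_ord inord_val.
move: (is_section_hom_eval n.+1 (q.2 *: ('X * P) - q.1 *: P)).
move/eq_is_section; apply=> p.
by rewrite hom_evalB hom_eval_mulX hom_eval_lift ?size_poly // evP /cross; ring.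
Qed.

Lemma is_section_exp n q : is_section (Posz n) (fun p => cross p q ^+ n).
Proof.
elim: n => [|n IHn]; first by move/eq_is_section: is_section1; apply=> p; rewrite expr0.
by move/eq_is_section: (is_section_cross q IHn); apply=> p; rewrite exprS.
Qed.

Lemma section_normalize {d f} p : is_section d f -> f p != 0 ->
  exists c : 'rV[C]_(nsec d), ev d c p = 1 /\ forall x, f x = 0 -> ev d c x = 0.
Proof.
case=> c Hc fp; exists ((f p)^-1 *: c).
by split=> [|x fx]; rewrite evZ Hc ?mulVf // fx mulr0.
Qed.

Lemma section_interp2 n {p q} : distinct_pts p q ->
  exists c : 'rV[C]_(nsec (Posz n.+1)),
    ev (Posz n.+1) c p = 1 /\ ev (Posz n.+1) c q = 0.
Proof.
move=> pq; have [|c [cp c0]] := section_normalize p (is_section_exp n.+1 q).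
  exact: expf_neq0.
by exists c; split=> //; apply: c0; rewrite /= crossxx expr0n.
Qed.

Lemma section_interp3 n {p q r} : distinct_pts p q -> distinct_pts p r ->
  exists c : 'rV[C]_(nsec (Posz n.+2)),
    [/\ ev (Posz n.+2) c p = 1, ev (Posz n.+2) c q = 0 & ev (Posz n.+2) c r = 0].
Proof.
move=> pq pr.
have [|c [cp c0]] :=
  section_normalize p (is_section_cross q (is_section_exp n.+1 r)).
  by rewrite mulf_neq0 // expf_neq0.
by exists c; split=> //; apply: c0; rewrite /= crossxx ?mul0r // expr0n mulr0.
Qed.

Definition row3 (x y z : C) : 'rV[C]_3 := \row_(k < 3) [:: x; y; z]`_k.

Lemma row3_0 : row3 0 0 0 = 0.
Proof. by apply/rowP => k; rewrite /row3 !mxE; case: k => [[|[|[|]]] ?]. Qed.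

Lemma row3_eq0 x y z : (row3 x y z == 0) = [&& x == 0, y == 0 & z == 0].
Proof.
apply/eqP/and3P => [/rowP r0 | [/eqP-> /eqP-> /eqP->]]; last exact: row3_0.
by split; apply/eqP; [move: (r0 0) | move: (r0 1) | move: (r0 2)]; rewrite /row3 !mxE.
Qed.

Lemma row3_sub_line a x y z x' y' z' :
  x' = a * x -> y' = a * y -> z' = a * z -> (row3 x' y' z' <= row3 x y z)%MS.
Proof.
move=> -> -> ->; rewrite (_ : row3 _ _ _ = a *: row3 x y z) ?scalemx_sub //.
by apply/rowP => k; rewrite /row3 !mxE; case: k => [[|[|[|]]] ?].
Qed.

Lemma row3_sub_ker x y z a b c :
  x * a + y * b + z * c = 0 -> (row3 x y z <= kermx (row3 a b c)^T)%MS.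
Proof.
move=> h; apply/sub_kermxP/rowP => i; rewrite /row3 !mxE !big_ord_recl big_ord0 !mxE /=.
by rewrite addr0 addrA h.
Qed.

Lemma rank_ker_row3 a b c : row3 a b c != 0 -> \rank (kermx (row3 a b c)^T) = 2%N.
Proof. by move=> h; rewrite mxrank_ker mxrank_tr rank_rV h. Qed.

Lemma rank_ge2_minor {F : fieldType} {m n} {A : 'M[F]_(m, n)} {u v : 'rV_n} {i j : 'I_n} :
  (u <= A)%MS -> (v <= A)%MS -> u 0 i * v 0 j - u 0 j * v 0 i != 0 ->
  (2 <= \rank A)%N.
Proof.
move=> uA vA minor; rewrite ltnNge; apply/negP => rA.
have u0 : u != 0 by apply: contraNneq minor => ->; rewrite !mxE !mul0r subrr.
have := mxrank_leqif_sup uA; rewrite rank_rV u0 => rkuA.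
have rk1 : \rank A = 1%N by have := rkuA.1; lia.
have /sub_rVP[a va] : (v <= u)%MS by apply: submx_trans vA _; rewrite -rkuA.2 rk1.
by move: minor; rewrite va !mxE (_ : _ - _ = 0) ?eqxx //; ring.
Qed.

Lemma row3_sub_comb3 {m} {A : 'M[C]_(m, 3)} {x1 y1 z1 x2 y2 z2 x3 y3 z3} :
  (row3 x1 y1 z1 <= A)%MS -> (row3 x2 y2 z2 <= A)%MS -> (row3 x3 y3 z3 <= A)%MS ->
  forall a b c x y z, x = a * x1 + b * x2 + c * x3 -> y = a * y1 + b * y2 + c * y3 ->
  z = a * z1 + b * z2 + c * z3 -> (row3 x y z <= A)%MS.
Proof.
move=> u v w a b c x y z -> -> ->.
rewrite (_ : row3 _ _ _ = a *: row3 x1 y1 z1 + b *: row3 x2 y2 z2 + c *: row3 x3 y3 z3).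
  by rewrite !addmx_sub ?scalemx_sub.
by apply/rowP => k; rewrite /row3 !mxE; case: k => [[|[|[|]]] ?].
Qed.

Definition det3 (x1 y1 z1 x2 y2 z2 x3 y3 z3 : C) : C :=
  x1 * (y2 * z3 - y3 * z2) - y1 * (x2 * z3 - x3 * z2) + z1 * (x2 * y3 - x3 * y2).

(* The combinations below have the columns of the adjugate matrix as coefficients. *)
Lemma rank_eq3_det {m} {A : 'M[C]_(m, 3)} {x1 y1 z1 x2 y2 z2 x3 y3 z3} :
  (row3 x1 y1 z1 <= A)%MS -> (row3 x2 y2 z2 <= A)%MS -> (row3 x3 y3 z3 <= A)%MS ->
  det3 x1 y1 z1 x2 y2 z2 x3 y3 z3 != 0 -> \rank A = 3%N.
Proof.
move=> u v w d0; have comb := row3_sub_comb3 u v w.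
set d := det3 _ _ _ _ _ _ _ _ _ in d0.
apply/eqP; change (row_full A); rewrite -sub1mx.
apply/row_subP => i; rewrite row1; case: i => [[|[|[|//]]] lti].
- rewrite (_ : delta_mx _ _ = row3 1 0 0); last first.
    by apply/rowP => k; rewrite /row3 !mxE; case: k => [[|[|[|]]] ?].
  apply: (comb ((y2 * z3 - y3 * z2) / d) ((y3 * z1 - y1 * z3) / d)
                ((y1 * z2 - y2 * z1) / d)); rewrite /d /det3; field; exact: d0.
- rewrite (_ : delta_mx _ _ = row3 0 1 0); last first.
    by apply/rowP => k; rewrite /row3 !mxE; case: k => [[|[|[|]]] ?].
  apply: (comb ((x3 * z2 - x2 * z3) / d) ((x1 * z3 - x3 * z1) / d)
                ((x2 * z1 - x1 * z2) / d)); rewrite /d /det3; field; exact: d0.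
- rewrite (_ : delta_mx _ _ = row3 0 0 1); last first.
    by apply/rowP => k; rewrite /row3 !mxE; case: k => [[|[|[|]]] ?].
  apply: (comb ((x2 * y3 - x3 * y2) / d) ((x3 * y1 - x1 * y3) / d)
                ((x1 * y2 - x2 * y1) / d)); rewrite /d /det3; field; exact: d0.
Qed.

Lemma G4_conds_linear da db D : linear (G4_conds da db D).
Proof.
move=> a u v; apply/rowP => k; rewrite /G4_conds !linearP !mxE !evD !evZ.
by case: ifP => _; [|case: ifP => _]; ring.
Qed.

HB.instance Definition _ da db D :=
  GRing.isLinear.Build C _ _ _ (G4_conds da db D) (G4_conds_linear da db D).

Definition G4_rank da db D : nat := \rank (lin1_mx (G4_conds da db D)).

Lemma G4_h0E da db D : G4_h0 da db D = (nsec da + nsec db - G4_rank da db D)%N.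
Proof. exact: mxrank_ker. Qed.

Lemma G4_condsE da db D s t :
  G4_conds da db D (row_mx s t) =
  row3 (ev da s (a1 D) - la D * ev da s (a2 D))
     (ev db t (b1 D) - lb D * ev db t (b2 D))
     (ev da s (a3 D) - le D * ev db t (b3 D)).
Proof.
rewrite /G4_conds row_mxKl row_mxKr.
by apply/rowP => k; rewrite /row3 !mxE; case: k => [[|[|[|]]] ?].
Qed.

Lemma G4_conds_sub_image da db D v :
  (G4_conds da db D v <= lin1_mx (G4_conds da db D))%MS.
Proof. by rewrite -mul_rV_lin1 submxMl. Qed.

Lemma row3_sub_G4_image {da db D} s t {x y z} :
  x = ev da s (a1 D) - la D * ev da s (a2 D) ->
  y = ev db t (b1 D) - lb D * ev db t (b2 D) ->
  z = ev da s (a3 D) - le D * ev db t (b3 D) ->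
  (row3 x y z <= lin1_mx (G4_conds da db D))%MS.
Proof. by move=> -> -> ->; rewrite -G4_condsE G4_conds_sub_image. Qed.

Lemma G4_rank_le da db D m (W : 'M[C]_(m, 3)) :
  (forall s t, (G4_conds da db D (row_mx s t) <= W)%MS) ->
  (G4_rank da db D <= \rank W)%N.
Proof.
move=> imW; apply/mxrankS/row_subP => i.
by rewrite rowE mul_rV_lin1 -[delta_mx _ _]hsubmxK imW.
Qed.

Lemma G4_not_jumping {da db r} :
  (forall D, G4_valid D -> G4_rank da db D = r) -> ~ G4_jumping da db.
Proof. by move=> rk [D1 [D2 [v1 v2 []]]]; rewrite !G4_h0E !rk. Qed.

Lemma G4_jumping_rank_lt da db D1 D2 : G4_valid D1 -> G4_valid D2 ->
  (G4_rank da db D1 < G4_rank da db D2)%N -> G4_jumping da db.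
Proof.
move=> v1 v2 lt12; exists D1, D2; split=> //; rewrite !G4_h0E.
move: (rank_leq_row (lin1_mx (G4_conds da db D2))) lt12; rewrite /G4_rank.
move: (\rank _) (\rank _) => r1 r2; lia.
Qed.

(* The edge node glues the fibres in the opposite direction, hence the inverse. *)
Definition G4_swap (D : G4_data) : G4_data :=
  mkG4 (b1 D) (b2 D) (b3 D) (a1 D) (a2 D) (a3 D) (lb D) (la D) (le D)^-1.

Lemma G4_swapK D : G4_swap (G4_swap D) = D.
Proof. by case: D => *; rewrite /G4_swap /= invrK. Qed.

Lemma G4_valid_swap D : G4_valid D -> G4_valid (G4_swap D).
Proof. by case=> -[? ? ?] [? ? ?] [? ? ?]; split; split; rewrite //= invr_eq0. Qed.

Definition swap_mx (k : C) : 'M[C]_3 :=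
  \matrix_(i < 3, j < 3) (nth [::] [:: [:: 0; 1; 0]; [:: 1; 0; 0]; [:: 0; 0; k]] i)`_j.

Lemma row3_swap_mx k x y z : row3 x y z *m swap_mx k = row3 y x (k * z).
Proof.
apply/rowP => j; rewrite !mxE !big_ord_recl big_ord0 /row3 /swap_mx !mxE /=.
by case: j => [[|[|[|//]]] ?] /=; ring.
Qed.

Lemma G4_conds_swap da db D s t : le D != 0 ->
  G4_conds db da (G4_swap D) (row_mx t s) =
  G4_conds da db D (row_mx s t) *m swap_mx (- (le D)^-1).
Proof. by move=> le0; rewrite !G4_condsE row3_swap_mx /=; congr row3; field. Qed.

Lemma G4_rank_swap_le da db D : le D != 0 ->
  (G4_rank db da (G4_swap D) <= G4_rank da db D)%N.
Proof.
move=> le0; apply: leq_trans (mxrankM_maxl _ (swap_mx (- (le D)^-1))).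
apply: G4_rank_le => t s.
by rewrite G4_conds_swap // submxMr // G4_conds_sub_image.
Qed.

Lemma G4_jumping_sym da db : G4_jumping da db -> G4_jumping db da.
Proof.
have h0_swap D : G4_valid D -> G4_h0 db da (G4_swap D) = G4_h0 da db D.
  case=> _ _ [_ _ le0]; rewrite !G4_h0E addnC; congr (_ - _)%N.
  apply/eqP; rewrite eqn_leq G4_rank_swap_le //.
  by rewrite -{1}(G4_swapK D) G4_rank_swap_le //= invr_eq0.
move=> [D1 [D2 [v1 v2 ne12]]]; exists (G4_swap D1), (G4_swap D2).
by split; [exact: G4_valid_swap | exact: G4_valid_swap | rewrite !h0_swap].
Qed.

Lemma G4_rank_Negz_Negz n m D : G4_rank (Negz n) (Negz m) D = 0%N.
Proof.
apply/eqP; rewrite -leqn0 -(mxrank0 C 1 3); apply: G4_rank_le => s t.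
by rewrite G4_condsE !ev_Negz !mulr0 subrr row3_0.
Qed.

Lemma G4_rank_Negz_0 n D : G4_valid D -> G4_rank (Negz n) (Posz 0) D = 1%N.
Proof.
case=> _ _ [_ _ le0]; have [t t1] := is_section1.
have im_t : (row3 0 (1 - lb D) (- le D) <= lin1_mx (G4_conds (Negz n) 0 D))%MS.
  by apply: (row3_sub_G4_image 0 t); rewrite ?ev_Negz ?t1; ring.
apply/anti_leq/andP; split.
- apply: leq_trans (rank_leq_row (row3 0 (1 - lb D) (- le D))).
  apply: G4_rank_le => s t'; rewrite G4_condsE !ev_Negz.
  rewrite (ev_deg0 _ (b2 D) (b1 D)) (ev_deg0 _ (b3 D) (b1 D)).
  by apply: (row3_sub_line (ev 0 t' (b1 D))); ring.
- apply: leq_trans (mxrankS im_t).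
  by rewrite rank_rV row3_eq0 oppr_eq0 (negbTE le0) !andbF.
Qed.

Lemma G4_rank_Negz_Posz2 n k D : G4_valid D -> G4_rank (Negz n) (Posz k.+2) D = 2%N.
Proof.
case=> _ [b12 b13 b23] [_ _ le0].
have [t1 [t1b1 t1b2 t1b3]] := section_interp3 k b12 b13.
have [t3 [t3b3 t3b1 t3b2]] :=
  section_interp3 k (distinct_pts_sym b13) (distinct_pts_sym b23).
apply/anti_leq/andP; split.
- rewrite -(rank_ker_row3 1 0 0); last by rewrite row3_eq0 oner_eq0.
  apply: G4_rank_le => s t; rewrite G4_condsE !ev_Negz.
  by apply: row3_sub_ker; ring.
- have u1 : (row3 0 1 0 <= lin1_mx (G4_conds (Negz n) (Posz k.+2) D))%MS.
    by apply: (row3_sub_G4_image 0 t1); rewrite ?ev_Negz ?t1b1 ?t1b2 ?t1b3; ring.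
  have u3 : (row3 0 0 (- le D) <= lin1_mx (G4_conds (Negz n) (Posz k.+2) D))%MS.
    by apply: (row3_sub_G4_image 0 t3); rewrite ?ev_Negz ?t3b1 ?t3b2 ?t3b3; ring.
  apply: (rank_ge2_minor (i := 1) (j := 2) u1 u3).
  by rewrite /row3 !mxE /= mul1r !mul0r subr0 oppr_eq0.
Qed.

Lemma G4_rank_Posz1_Posz2 m k D : G4_valid D -> G4_rank (Posz m.+1) (Posz k.+2) D = 3%N.
Proof.
case=> [[a12 _ _] [b12 b13 b23] [_ _ le0]].
have [s [sa1 sa2]] := section_interp2 m a12.
have [t1 [t1b1 t1b2 t1b3]] := section_interp3 k b12 b13.
have [t3 [t3b3 t3b1 t3b2]] :=
  section_interp3 k (distinct_pts_sym b13) (distinct_pts_sym b23).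
pose A := lin1_mx (G4_conds (Posz m.+1) (Posz k.+2) D).
have us : (row3 1 0 (ev _ s (a3 D)) <= A)%MS.
  by apply: (row3_sub_G4_image s 0); rewrite ?ev0 ?sa1 ?sa2; ring.
have u1 : (row3 0 1 0 <= A)%MS.
  by apply: (row3_sub_G4_image 0 t1); rewrite ?ev0 ?t1b1 ?t1b2 ?t1b3; ring.
have u3 : (row3 0 0 (- le D) <= A)%MS.
  by apply: (row3_sub_G4_image 0 t3); rewrite ?ev0 ?t3b1 ?t3b2 ?t3b3; ring.
apply: (rank_eq3_det us u1 u3).
by rewrite /det3 (_ : _ + _ = - le D) ?oppr_eq0 //; ring.
Qed.

Lemma is_section_X n : is_section (Posz n) (fun p => p.1 ^+ n).
Proof.
move/eq_is_section: (is_section_exp n (0, 1)); apply=> p.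
by rewrite /cross mulr1 mul0r subr0.
Qed.

Lemma is_section_Y n : is_section (Posz n) (fun p => p.2 ^+ n).
Proof.
move/eq_is_section: (is_section_exp n (-1, 0)); apply=> p.
by rewrite /cross mulr0 sub0r mulN1r opprK.
Qed.

Local Notation pinf := ((1 : C), (0 : C)).
Local Notation pzero := ((0 : C), (1 : C)).
Local Notation pone := ((1 : C), (1 : C)).

Definition G4_std (x y z : C) : G4_data := mkG4 pinf pzero pone pinf pzero pone x y z.

Lemma G4_std_valid (x y z : C) :
  x != 0 -> y != 0 -> z != 0 -> G4_valid (G4_std x y z).
Proof.
by move=> *; do 2?split; rewrite /distinct_pts /= ?mul1r ?mulr1 ?mul0r ?mulr0
  ?subr0 ?sub0r ?oppr_eq0 ?oner_eq0.
Qed.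

Lemma ev_pone (c : 'rV[C]_(nsec (Posz 1))) :
  ev (Posz 1) c pone = ev (Posz 1) c pinf + ev (Posz 1) c pzero.
Proof. by rewrite -ev_deg1D /= addr0 add0r. Qed.

Lemma G4_jumping_Negz_1 n : G4_jumping (Negz n) (Posz 1).
Proof.
apply: (@G4_jumping_rank_lt _ _ (G4_std 1 (-1) 1) (G4_std 1 1 1)).
- by apply: G4_std_valid; rewrite ?oppr_eq0 oner_eq0.
- by apply: G4_std_valid; rewrite oner_eq0.
apply: (@leq_ltn_trans 1).
  apply: leq_trans (rank_leq_row (row3 0 1 (-1))).
  apply: G4_rank_le => s t; rewrite G4_condsE /= !ev_Negz ev_pone.
  by apply: (row3_sub_line (ev 1 t pinf + ev 1 t pzero)); ring.
have [tX tXE] := is_section_X 1; have [tY tYE] := is_section_Y 1.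
pose A := lin1_mx (G4_conds (Negz n) (Posz 1) (G4_std 1 1 1)).
have uX : (row3 0 1 (-1) <= A)%MS.
  by apply: (row3_sub_G4_image 0 tX); rewrite /= ?ev_Negz ?tXE /=; ring.
have uY : (row3 0 (-1) (-1) <= A)%MS.
  by apply: (row3_sub_G4_image 0 tY); rewrite /= ?ev_Negz ?tYE /=; ring.
apply: (rank_ge2_minor (i := 1) (j := 2) uX uY).
by rewrite /row3 !mxE /= (_ : _ - _ = - 2%:R) ?oppr_eq0 ?natC_neq0 //; ring.
Qed.

Lemma G4_jumping_0_0 : G4_jumping (Posz 0) (Posz 0).
Proof.
apply: (@G4_jumping_rank_lt _ _ (G4_std 1 1 1) (G4_std 2%:R 2%:R 1)).
- by apply: G4_std_valid; rewrite oner_eq0.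
- by apply: G4_std_valid; rewrite ?natC_neq0 ?oner_eq0.
apply: (@leq_ltn_trans 1).
  apply: leq_trans (rank_leq_row (row3 0 0 1)).
  apply: G4_rank_le => s t; rewrite G4_condsE /=.
  rewrite (ev_deg0 s pzero pinf) (ev_deg0 s pone pinf).
  rewrite (ev_deg0 t pzero pinf) (ev_deg0 t pone pinf).
  by apply: (row3_sub_line (ev 0 s pinf - ev 0 t pinf)); ring.
have [c cE] := is_section1.
pose A := lin1_mx (G4_conds (Posz 0) (Posz 0) (G4_std 2%:R 2%:R 1)).
have us : (row3 (-1) 0 1 <= A)%MS.
  by apply: (row3_sub_G4_image c 0); rewrite /= ?ev0 ?cE; ring.
have ut : (row3 0 (-1) (-1) <= A)%MS.
  by apply: (row3_sub_G4_image 0 c); rewrite /= ?ev0 ?cE; ring.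
apply: (rank_ge2_minor (i := 0) (j := 1) us ut).
by rewrite /row3 !mxE /= (_ : _ - _ = 1) ?oner_eq0 //; ring.
Qed.

Lemma G4_jumping_0_Posz m : G4_jumping (Posz 0) (Posz m.+1).
Proof.
apply: (@G4_jumping_rank_lt _ _ (G4_std 1 1 1) (G4_std 2%:R 2%:R 1)).
- by apply: G4_std_valid; rewrite oner_eq0.
- by apply: G4_std_valid; rewrite ?natC_neq0 ?oner_eq0.
apply: (@leq_ltn_trans 2).
  rewrite -(rank_ker_row3 1 0 0); last by rewrite row3_eq0 oner_eq0.
  apply: G4_rank_le => s t; rewrite G4_condsE /= (ev_deg0 s pzero pinf).
  by apply: row3_sub_ker; ring.
have [c cE] := is_section1.
have [tX tXE] := is_section_X m.+1; have [tY tYE] := is_section_Y m.+1.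
pose A := lin1_mx (G4_conds (Posz 0) (Posz m.+1) (G4_std 2%:R 2%:R 1)).
have us : (row3 (-1) 0 1 <= A)%MS.
  by apply: (row3_sub_G4_image c 0); rewrite /= ?ev0 ?cE; ring.
have uX : (row3 0 1 (-1) <= A)%MS.
  by apply: (row3_sub_G4_image 0 tX); rewrite /= ?ev0 ?tXE /= ?expr1n ?expr0n /=; ring.
have uY : (row3 0 (- 2%:R) (-1) <= A)%MS.
  by apply: (row3_sub_G4_image 0 tY); rewrite /= ?ev0 ?tYE /= ?expr1n ?expr0n /=; ring.
rewrite /G4_rank (rank_eq3_det us uX uY) //.
by rewrite /det3 (_ : _ + _ = 3%:R) ?natC_neq0 //; ring.
Qed.

Lemma G4_jumping_1_1 : G4_jumping (Posz 1) (Posz 1).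
Proof.
apply: (@G4_jumping_rank_lt _ _ (G4_std (-1) (-1) 1) (G4_std 2%:R 1 1)).
- by apply: G4_std_valid; rewrite ?oppr_eq0 oner_eq0.
- by apply: G4_std_valid; rewrite ?natC_neq0 ?oner_eq0.
apply: (@leq_ltn_trans 2).
  rewrite -(rank_ker_row3 1 (-1) (-1)); last by rewrite row3_eq0 oner_eq0.
  apply: G4_rank_le => s t; rewrite G4_condsE /= !ev_pone.
  by apply: row3_sub_ker; ring.
have [tX tXE] := is_section_X 1; have [tY tYE] := is_section_Y 1.
pose A := lin1_mx (G4_conds (Posz 1) (Posz 1) (G4_std 2%:R 1 1)).
have uX : (row3 1 0 1 <= A)%MS.
  by apply: (row3_sub_G4_image tX 0); rewrite /= ?ev0 ?tXE /=; ring.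
have uY : (row3 (- 2%:R) 0 1 <= A)%MS.
  by apply: (row3_sub_G4_image tY 0); rewrite /= ?ev0 ?tYE /=; ring.
have vX : (row3 0 1 (-1) <= A)%MS.
  by apply: (row3_sub_G4_image 0 tX); rewrite /= ?ev0 ?tXE /=; ring.
rewrite /G4_rank (rank_eq3_det uX uY vX) //.
by rewrite /det3 (_ : _ + _ = - 3%:R) ?oppr_eq0 ?natC_neq0 //; ring.
Qed.

Theorem mainTheorem11 (da db : int) :
  G4_jumping da db <->
  ((da < 0 /\ db = 1) \/
   (da = 0 /\ 0 <= db) \/
   (da = 1 /\ db < 0) \/
   (0 <= da /\ db = 0) \/
   (da = 1 /\ db = 1)).
Proof.
wlog le_ab : da db / da <= db.
  move=> H; have [/H // | /ltW/H [J_ba ba_J]] := lerP da db.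
  by split=> [/G4_jumping_sym/J_ba | ?]; [lia | apply/G4_jumping_sym/ba_J; lia].
case: da le_ab => [[|[|ka]]|na]; case: db => [[|[|kb]]|nb] le_ab;
  try by exfalso; lia.
- by split=> _; [lia | exact: G4_jumping_0_0].
- by split=> _; [lia | exact: G4_jumping_0_Posz].
- by split=> _; [lia | exact: G4_jumping_0_Posz].
- by split=> _; [lia | exact: G4_jumping_1_1].
- by split=> [/(G4_not_jumping (G4_rank_Posz1_Posz2 0 kb))[] | ?]; exfalso; lia.
- by split=> [/(G4_not_jumping (G4_rank_Posz1_Posz2 ka.+1 kb))[] | ?]; exfalso; lia.
- by split=> [/(G4_not_jumping (G4_rank_Negz_0 na))[] | ?]; exfalso; lia.
- by split=> _; [lia | exact: G4_jumping_Negz_1].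
- by split=> [/(G4_not_jumping (G4_rank_Negz_Posz2 na kb))[] | ?]; exfalso; lia.
- by split=> [/(G4_not_jumping (fun D _ => G4_rank_Negz_Negz na nb D))[] | ?];
    exfalso; lia.
Qed.
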